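(* Let $w\in\mathbb{R}^n$, $w\ge0$. The following statements are equivalent: (a) $w$ is strongly bilevel feasible; (b) $\{w\}$ is a reaction set; (c) $\mathbf{W}(\mathbf{T}(w))=\{w\}$; (d) $(w,g(w))$ is an extreme point of $\operatorname{epi}(g)$; (e) $\dim\mathbf{T}(w)=n$.
   Context: Single-commodity network pricing setting: $G=(\mathcal{V},\mathcal{A})$ directed graph, arc costs $c\ge0$, nonempty tolled arc set $\mathcal{A}_1\subsetneq\mathcal{A}$, $n=|\mathcal{A}_1|$, $N$ node–arc incidence matrix, single origin $o$ and destination $d$ connected by a toll-free path, $b_o=1$, $b_d=-1$, $b_i=0$ otherwise, $\mathcal{X}=\{x\in\mathbb{R}^{\mathcal{A}}: Nx=b,\ x\ge0\}$, $x_{\mathcal{A}_1}$ the restriction of $x$ to $\mathcal{A}_1$; tolls $t\in\mathbb{R}^n$ are extended by zeros to $\bar t\in\mathbb{R}^{\mathcal{A}}$. Let $f(t)=\min\{c^\top x+t^\top x_{\mathcal{A}_1}: x\in\mathcal{X}\}$ for $t\ge0$, $f(t)=-\infty$ otherwise, and $g(w)=\sup_{t\in\mathbb{R}^n}\{f(t)-t^\top w\}$. A reaction set is a set $W=\{w:(w,z)\in F\text{ for some }z\}$ where $F$ is a face of $\operatorname{epi}(g)$ whose affine hull's direction space does not contain $(0,1)$. A vector $w\ge0$ is strongly bilevel feasible when $\{w\}$ is a reaction set. For $t\ge0$, $\mathbf{W}(t)$ is the set of $w$ such that $(w,x)$ is optimal for some $x$ in $\min_{w,x}\{c^\top x+t^\top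 w: x_{\mathcal{A}_1}\le w,\ Nx=b,\ w\ge0,\ x\ge0\}$, and for a set $T$, $\mathbf{W}(T)=\bigcap_{t\in T}\mathbf{W}(t)$. For $w\ge0$, $\mathbf{T}(w)$ is the set of $t$ that are parts of optimal solutions $(t,y)$ of $\max_{t,y}\{b^\top y-w^\top t: N^\top y-\bar t\le c,\ t\ge0\}$. *)

From HB Require Import structures.
From mathcomp Require Import all_boot all_order all_algebra.
From mathcomp Require Import all_classical reals constructive_ereal ereal.

Set Implicit Arguments.
Unset Strict Implicit.
Unset Printing Implicit Defensive.

Import Order.TTheory GRing.Theory Num.Theory.
Local Open Scope ring_scope.
Local Open Scope classical_set_scope.

Section Convex.
Variables (R : realType) (V : lmodType R).

Definition convex_set (C : set V) : Prop :=
  forall x y, C x -> C y -> forall l : R, 0 <= l <= 1 ->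
    C (l *: x + (1 - l) *: y).

Definition is_face (C F : set V) : Prop :=
  [/\ F `<=` C, convex_set F &
      forall x y, C x -> C y -> forall l : R, 0 < l < 1 ->
        F (l *: x + (1 - l) *: y) -> F x /\ F y].

Definition extreme_point (C : set V) (p : V) : Prop :=
  C p /\ forall x y, C x -> C y -> forall l : R, 0 < l < 1 ->
    p = l *: x + (1 - l) *: y -> x = p /\ y = p.

(* v belongs to the direction space of the affine hull of F,            *)
Definition in_aff_dir (F : set V) (v : V) : Prop :=
  exists (k : nat) (p q : 'I_k -> V) (mu : 'I_k -> R),
    (forall i, F (p i) /\ F (q i)) /\ v = \sum_(i < k) mu i *: (p i - q i).

Definition aff_indep (k : nat) (p : 'I_k -> V) : Prop :=
  forall lam : 'I_k -> R,
    \sum_(i < k) lam i = 0 -> \sum_(i < k) lam i *: p i = 0 ->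
    forall i, lam i = 0.

Definition aff_dim_eq (S : set V) (k : nat) : Prop :=
  (exists p : 'I_k.+1 -> V, (forall i, S (p i)) /\ aff_indep p) /\
  ~ (exists p : 'I_k.+2 -> V, (forall i, S (p i)) /\ aff_indep p).

End Convex.

Record network (R : realType) := Network {
  node : finType;
  arc : finType;
  tail : arc -> node;
  head : arc -> node;
  cost : arc -> R;
  tolled : {set arc};
  orig : node;
  dest : node
}.
Arguments node {R} n : rename.
Arguments arc {R} n : rename.
Arguments tail {R} n _ : rename.
Arguments head {R} n _ : rename.
Arguments cost {R} n _ : rename.
Arguments tolled {R} n : rename.
Arguments orig {R} n : rename.
Arguments dest {R} n : rename.

Section Network.
Variables (R : realType) (G : network R).

Definition tarc := {a : arc G | a \in tolled G}.
(* R^n with n = |A_1|, coordinates indexed by the tolled arcs *)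
Definition tvec := {ffun tarc -> R^o}.
Definition ntolls : nat := #|tolled G|.

Definition tollfree_arc (u v : node G) : bool :=
  [exists a, [&& a \notin tolled G, tail G a == u & head G a == v]].

Definition standing_assumptions : Prop :=
  [/\ forall a, 0 <= cost G a,
      tolled G != finset.set0,
      tolled G != finset.setT,
      orig G != dest G &
      connect tollfree_arc (orig G) (dest G)].

(* (N x)_v, N the node-arc incidence matrix (+1 at tail, -1 at head) *)
Definition incid (x : arc G -> R) (v : node G) : R :=
  \sum_(a | tail G a == v) x a - \sum_(a | head G a == v) x a.
Definition incidT (y : node G -> R) (a : arc G) : R := y (tail G a) - y (head G a).

Definition bvec (v : node G) : R :=
  if v == orig G then 1 else if v == dest G then -1 else 0.

Definition Xset : set (arc G -> R) :=
  [set x | (forall v, incid x v = bvec v) /\ (forall a, 0 <= x a)].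

Definition restrA1 (x : arc G -> R) : tvec := [ffun a1 => x (val a1)].

Definition extend (t : tvec) (a : arc G) : R :=
  match @insub _ (fun a => a \in tolled G) tarc a with
  | Some a1 => t a1 | None => 0 end.

Definition dotT (t w : tvec) : R := \sum_i t i * w i.
Definition dotA (u x : arc G -> R) : R := \sum_a u a * x a.
Definition dotV (u y : node G -> R) : R := \sum_v u v * y v.

Definition tnonneg (t : tvec) : bool := [forall i, 0 <= t i].

Definition fval (t : tvec) : \bar R :=
  if tnonneg t then
    ereal_inf [set ((dotA (cost G) x + dotT t (restrA1 x))%:E) | x in Xset]
  else -oo%E.

Definition gval (w : tvec) : \bar R :=
  ereal_sup [set (fval t - (dotT t w)%:E)%E | t in [set: tvec]].

Definition epi_g : set (tvec * R^o)%type :=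
  [set p | (gval p.1 <= (p.2 : R)%:E)%E].

Definition reaction_set (W : set tvec) : Prop :=
  exists F : set (tvec * R^o)%type,
    [/\ is_face epi_g F,
        ~ in_aff_dir F ((0 : tvec), (1 : R^o)) &
        W = [set w | exists z, F (w, z)]].

Definition strongly_bilevel_feasible (w : tvec) : Prop :=
  tnonneg w /\ reaction_set [set w].

(* follower's problem  min { c x + t w : x_A1 <= w, Nx = b, w >= 0, x >= 0 } *)
Definition lower_feasible (w : tvec) (x : arc G -> R) : Prop :=
  [/\ forall a1 : tarc, x (val a1) <= w a1,
      forall v, incid x v = bvec v,
      tnonneg w &
      forall a, 0 <= x a].

Definition lower_obj (t w : tvec) (x : arc G -> R) : R :=
  dotA (cost G) x + dotT t w.

Definition Wset (t : tvec) : set tvec :=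
  [set w | exists x, lower_feasible w x /\
     forall w' x', lower_feasible w' x' -> lower_obj t w x <= lower_obj t w' x'].

Definition WsetT (T : set tvec) : set tvec :=
  [set w | forall t, T t -> Wset t w].

(* max { b y - w t : N^T y - tbar <= c, t >= 0 } *)
Definition dual_feasible (t : tvec) (y : node G -> R) : Prop :=
  (forall a, incidT y a - extend t a <= cost G a) /\ tnonneg t.

Definition dual_obj (w t : tvec) (y : node G -> R) : R :=
  dotV bvec y - dotT w t.

Definition Tset (w : tvec) : set tvec :=
  [set t | exists y, dual_feasible t y /\
     forall t' y', dual_feasible t' y' -> dual_obj w t' y' <= dual_obj w t y].

End Network.

From Pilot Require Import Defs.
From HB Require Import structures.
From mathcomp Require Import all_boot all_order all_algebra.
From mathcomp Require Import all_classical reals constructive_ereal ereal.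
From mathcomp Require Import ring lra.
Import Order.TTheory GRing.Theory Num.Theory.
Local Open Scope ring_scope.
Local Open Scope classical_set_scope.
Set Implicit Arguments.
Unset Strict Implicit.
Unset Printing Implicit Defensive.

(* LP duality identifies [g w] with the optimal value of the follower's problem at
   [w], and [T(w)] with the toll part of the optimal dual solutions; Farkas' lemma,
   obtained by Fourier-Motzkin elimination, gives strong duality and dual
   attainment. If [T(w)] is full-dimensional, every [w'] in [W(T(w))], and every
   point of an open segment of [epi g] through [(w, g w)], makes [t . (w' - w)]
   constant on [T(w)], which forces [w' = w]. Otherwise [T(w)] lies in a
   hyperplane [t . d = kap], and Farkas' lemma applied to the dual problem
   restricted to its optimal face gives [g (w + e d) <= g w - e kap] for both
   signs of a small [e]: then [w + e d] belongs to [W(T(w))], and [(w, g w)] is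
   the midpoint of two points of [epi g]. Finally, a face of [epi g] projecting
   onto [{w}] and containing no vertical direction can only be the extreme point
   [(w, g w)]. *)

Section Farkas.
Variable R : realFieldType.

Lemma sumr_delta (I : finType) (k : I) (F : I -> R) :
  \sum_i (i == k)%:R * F i = F k.
Proof.
rewrite (bigD1 k) //= eqxx mul1r big1 ?addr0 // => i /negbTE ->; by rewrite mul0r.
Qed.

Lemma sumr_delta2 (I : finType) (p q : I) (A B : R) (F : I -> R) :
  \sum_i ((i == p)%:R * A + (i == q)%:R * B) * F i = A * F p + B * F q.
Proof.
rewrite -(sumr_delta p (fun i => A * F i)) -(sumr_delta q (fun i => B * F i)).
by rewrite -big_split; apply: eq_bigr => i _ /=; ring.
Qed.

Lemma sumr_option (T : finType) (F : option T -> R) :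
  \sum_o F o = F None + \sum_t F (Some t).
Proof.
rewrite (bigD1 None) //=; congr (_ + _).
rewrite (reindex_omap Some id) //=; last by case.
by apply: eq_bigl => t; rewrite eqxx.
Qed.

Lemma exists_between (I : finType) (P Q : pred I) (L U : I -> R) :
  (forall p q, P p -> Q q -> L p <= U q) ->
  exists z, (forall p, P p -> L p <= z) /\ (forall q, Q q -> z <= U q).
Proof.
move=> LU.
(* The default value lies below every [U q], so the maximum is an upper bound for
   the [L p] even when [P] is empty. *)
exists (\big[Num.max/- \sum_i `|U i|]_(p | P p) L p); split=> [p Pp|q Qq].
  exact: le_bigmax_cond.
apply: bigmax_le => [|p Pp]; last exact: LU.
rewrite (bigD1 q) //= opprD.
have := ler_norm (- U q); rewrite normrN.
have : 0 <= \sum_(i | i != q) `|U i| by apply: sumr_ge0.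
lra.
Qed.

Variable V : finType.

Definition dotf (a x : V -> R) := \sum_v a v * x v.

Lemma dotf_upd a x v0 z :
  dotf a (fun v => if v == v0 then z else x v) = dotf a x - a v0 * x v0 + a v0 * z.
Proof.
rewrite /dotf (bigD1 v0) //= eqxx [in RHS](bigD1 v0) //=.
rewrite (eq_bigr (fun v => a v * x v)) => [|v /negbTE ->] //; ring.
Qed.

Lemma dotfZr a x k : dotf a (fun v => k * x v) = k * dotf a x.
Proof. by rewrite /dotf mulr_sumr; apply: eq_bigr => v _; rewrite mulrCA. Qed.

Lemma dotfDr a x y : dotf a (fun v => x v + y v) = dotf a x + dotf a y.
Proof. by rewrite /dotf -big_split; apply: eq_bigr => v _; rewrite mulrDr. Qed.

Lemma dotfNl a x : dotf (fun v => - a v) x = - dotf a x.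
Proof. by rewrite /dotf -sumrN; apply: eq_bigr => v _; rewrite mulNr. Qed.

Lemma dot0f x : dotf (fun _ => 0) x = 0.
Proof. by rewrite /dotf big1 // => v _; rewrite mul0r. Qed.

Definition feasible (I : finType) (al : I -> V -> R) (be : I -> R) :=
  exists x, forall i, dotf (al i) x <= be i.

Definition infeas_cert (I : finType) (al : I -> V -> R) (be : I -> R) (u : I -> R) :=
  [/\ forall i, 0 <= u i, forall v, \sum_i u i * al i v = 0 & \sum_i u i * be i < 0].

Section System.
Variables (I : finType) (al : I -> V -> R) (be : I -> R).

Lemma infeas_cert_comb (J : finType) (M : J -> I -> R) (u : J -> R) :
  (forall j i, 0 <= M j i) ->
  infeas_cert (fun j v => \sum_i M j i * al i v) (fun j => \sum_i M j i * be i) u ->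
  infeas_cert al be (fun i => \sum_j u j * M j i).
Proof.
have comb (F : I -> R) :
    \sum_i (\sum_j u j * M j i) * F i = \sum_j u j * \sum_i M j i * F i.
  under eq_bigr do rewrite mulr_suml.
  rewrite exchange_big /=; apply: eq_bigr => j _.
  by rewrite mulr_sumr; apply: eq_bigr => i _; rewrite mulrA.
move=> M0 [u0 ual ube]; split=> [i|v|]; rewrite ?comb //.
by apply: sumr_ge0 => j _; apply: mulr_ge0.
Qed.

Section FourierMotzkin.
Variable v0 : V.

(* Rows of the system obtained by eliminating the variable [v0]: every row of the
   original system not involving [v0], and for every pair of rows [(p, q)] with
   coefficients of opposite signs at [v0] the combination cancelling [v0]. *)
Definition fm_mult (j : I + I * I) (i : I) : R :=
  match j with
  | inl i0 => if al i0 v0 == 0 then (i == i0)%:R else 0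
  | inr (p, q) => if (0 < al p v0) && (al q v0 < 0)
                  then (i == p)%:R * (- al q v0) + (i == q)%:R * al p v0 else 0
  end.

Definition fm_al j v := \sum_i fm_mult j i * al i v.
Definition fm_be j := \sum_i fm_mult j i * be i.

Lemma fm_mult_ge0 j i : 0 <= fm_mult j i.
Proof.
case: j => [i0|[p q]] /=; first by case: ifP => // _; rewrite ler0n.
case: ifP => // /andP [hp hq].
by apply: addr_ge0; apply: mulr_ge0; rewrite ?ler0n //; lra.
Qed.

Lemma fm_al_v0 j : fm_al j v0 = 0.
Proof.
rewrite /fm_al; case: j => [i0|[p q]] /=.
  have [h|_] := eqVneq (al i0 v0) 0; first by rewrite sumr_delta.
  by rewrite big1 // => i _; rewrite mul0r.
have [/andP [hp hq]|_] := boolP ((0 < al p v0) && (al q v0 < 0)).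
  by rewrite sumr_delta2; ring.
by rewrite big1 // => i _; rewrite mul0r.
Qed.

Lemma fm_al_zero j v : (forall i, al i v = 0) -> fm_al j v = 0.
Proof. by move=> h; rewrite /fm_al big1 // => i _; rewrite h mulr0. Qed.

Lemma fm_lift : feasible fm_al fm_be -> feasible al be.
Proof.
(* Rows negative (resp. positive) at [v0] bound the new value of [x v0] from below
   (resp. above), and the combined rows say that these bounds are compatible. *)
move=> [x Hx].
pose rho i := dotf (al i) x - al i v0 * x v0.
pose Lb i := (be i - rho i) / al i v0.
have rho_le i : al i v0 = 0 -> rho i <= be i.
  move=> hi; have := Hx (inl i).
  have -> : fm_al (inl i) = al i.
    by apply: funext => v; rewrite /fm_al /= hi eqxx sumr_delta.
  by rewrite /fm_be /rho /= hi eqxx mul0r subr0 sumr_delta.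
have Lb_le q p : al q v0 < 0 -> 0 < al p v0 -> Lb q <= Lb p.
  move=> hq hp; have := Hx (inr (p, q)).
  have -> : fm_al (inr (p, q)) = fun v => - al q v0 * al p v + al p v0 * al q v.
    by apply: funext => v; rewrite /fm_al /= hp hq /= sumr_delta2.
  rewrite /fm_be /= hp hq /= sumr_delta2.
  rewrite /dotf; under eq_bigr do rewrite mulrDl -!mulrA.
  rewrite big_split /= -!mulr_sumr -!/(dotf _ x) => H.
  have eq_p : be p - rho p = al p v0 * Lb p by rewrite /Lb mulrC divfK ?gt_eqF.
  have eq_q : be q - rho q = al q v0 * Lb q by rewrite /Lb mulrC divfK ?lt_eqF.
  have : 0 <= (al p v0 * - al q v0) * (Lb p - Lb q).
    suff -> : (al p v0 * - al q v0) * (Lb p - Lb q) =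
              - al q v0 * (be p - rho p) + al p v0 * (be q - rho q) by rewrite /rho; lra.
    by rewrite eq_p eq_q; ring.
  by rewrite pmulr_rge0 ?subr_ge0 // mulr_gt0 // oppr_gt0.
have [z [Hlo Hup]] := exists_between (P := fun q => al q v0 < 0)
                                     (Q := fun p => 0 < al p v0) Lb_le.
exists (fun v => if v == v0 then z else x v) => i; rewrite dotf_upd -/(rho i).
have eq_i : al i v0 != 0 -> al i v0 * Lb i = be i - rho i.
  by move=> hn; rewrite /Lb mulrC divfK.
case: (ltrgtP (al i v0) 0) => hi.
- have : al i v0 * z <= al i v0 * Lb i by rewrite ler_nM2l // Hlo.
  by rewrite eq_i ?lt_eqF //; lra.
- have : al i v0 * z <= al i v0 * Lb i by rewrite ler_pM2l // Hup.
  by rewrite eq_i ?gt_eqF //; lra.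
- by rewrite hi mul0r addr0 rho_le.
Qed.

End FourierMotzkin.
End System.

Lemma farkas_supp n (S : {set V}) : (#|S| <= n)%N ->
  forall (I : finType) (al : I -> V -> R) (be : I -> R),
  (forall i v, v \notin S -> al i v = 0) -> ~ feasible al be ->
  exists u, infeas_cert al be u.
Proof.
elim: n S => [|n IH] S HS I al be Hsupp Hinf.
  have S0 : S = finset.set0 by apply: cards0_eq; apply/eqP; rewrite -leqn0.
  have [/existsP [i Hi]|/existsPn Hbe] := boolP [exists i, be i < 0].
    exists (fun j => (j == i)%:R); split=> [j|v|]; rewrite ?sumr_delta ?ler0n //.
    by rewrite Hsupp // S0 inE.
  case: Hinf; exists (fun _ => 0) => i.
  by rewrite /dotf big1 => [|v _]; rewrite ?mulr0 // leNgt Hbe.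
have [S0|[v0 Sv0]] := set_0Vmem S; first by apply: (IH S) => //; rewrite S0 cards0.
have [u' cert] : exists u', infeas_cert (fm_al al v0) (fm_be al be v0) u'.
  apply: (IH (S :\ v0)) => [|j v|].
  - by move: HS; rewrite (cardsD1 v0 S) Sv0.
  - rewrite !inE negb_and negbK => /orP [/eqP ->|vS]; first exact: fm_al_v0.
    by apply: fm_al_zero => i; apply: Hsupp.
  - by move/fm_lift.
by exists (fun i => \sum_j u' j * fm_mult al v0 j i); apply: infeas_cert_comb cert;
  apply: fm_mult_ge0.
Qed.

Lemma farkas (I : finType) (al : I -> V -> R) (be : I -> R) :
  ~ feasible al be -> exists u, infeas_cert al be u.
Proof. by apply: (@farkas_supp _ [set: V]) => // i v; rewrite inE. Qed.

End Farkas.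

Section FarkasImplied.
Variables (R : realFieldType) (V I : finType).
Variables (al : I -> V -> R) (be : I -> R) (ga : V -> R) (de : R).

(* A feasible point [(tau, x)] of this system with [tau > 0] gives the point
   [x / tau] of [al x <= be] violating [ga x <= de]; with [tau = 0] it gives a
   recession direction along which [ga] is unbounded. *)
Definition homog_al (r : option (option I)) (v : option V) : R :=
  match r, v with
  | Some (Some i), Some v => al i v | Some (Some i), None => - be i
  | Some None, Some _ => 0 | Some None, None => -1
  | None, Some v => - ga v | None, None => de end.

Definition homog_be (r : option (option I)) : R := if r is None then -1 else 0.

Hypothesis feas : feasible al be.
Hypothesis implied : forall x, (forall i, dotf (al i) x <= be i) -> dotf ga x <= de.

Lemma homog_infeasible : ~ feasible homog_al homog_be.
Proof.
move=> [x Hx]; set tau := x None; set y := fun v => x (Some v).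
have split_row r : dotf (homog_al r) x =
    homog_al r None * tau + dotf (fun v => homog_al r (Some v)) y.
  by rewrite /dotf sumr_option.
have Hal i : dotf (al i) y <= be i * tau.
  by have := Hx (Some (Some i)); rewrite split_row /=; lra.
have tau_ge0 : 0 <= tau by have := Hx (Some None); rewrite split_row /= dot0f; lra.
have Hga : 1 + de * tau <= dotf ga y.
  by have := Hx None; rewrite split_row /= dotfNl; lra.
have [tau_gt0|tau_le0] := boolP (0 < tau).
  have : dotf ga (fun v => tau^-1 * y v) <= de.
    by apply: implied => i; rewrite dotfZr ler_pdivrMl // mulrC Hal.
  by rewrite dotfZr ler_pdivrMl //; lra.
have tau0 : tau = 0 by lra.
have [x0 Hx0] := feas.
have [lam lam_gt0 lam_big] : exists2 lam : R, 0 < lam & de - dotf ga x0 < lam.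
  exists (`|de - dotf ga x0| + 1);
    by have := ler_norm (de - dotf ga x0); have := normr_ge0 (de - dotf ga x0); lra.
have : dotf ga (fun v => x0 v + lam * y v) <= de.
  apply: implied => i; rewrite dotfDr dotfZr.
  have : lam * dotf (al i) y <= 0.
    by apply: mulr_ge0_le0; [exact: ltW | have := Hal i; rewrite tau0 mulr0].
  by have := Hx0 i; lra.
have : lam * 1 <= lam * dotf ga y by rewrite ler_pM2l //; move: Hga; rewrite tau0 mulr0; lra.
rewrite dotfDr dotfZr mulr1; lra.
Qed.

Lemma farkas_implied : exists u : I -> R,
  [/\ forall i, 0 <= u i, forall v, \sum_i u i * al i v = ga v & \sum_i u i * be i <= de].
Proof.
have [u [u_ge0 u_al u_be]] := farkas homog_infeasible.
have uN : 0 < u None.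
  move: u_be; rewrite !sumr_option /= big1 => [|i _]; [lra | by rewrite mulr0].
have sum_div (F : I -> R) :
    \sum_i u (Some (Some i)) / u None * F i = (\sum_i u (Some (Some i)) * F i) / u None.
  by rewrite mulr_suml; apply: eq_bigr => i _; rewrite mulrAC.
exists (fun i => u (Some (Some i)) / u None); split=> [i|v|].
- by apply: divr_ge0; [apply: u_ge0 | apply: ltW].
- have := u_al (Some v); rewrite !sumr_option /= mulr0 add0r mulrN => H.
  rewrite sum_div (_ : \sum_i u (Some (Some i)) * al i v = u None * ga v); last by lra.
  by rewrite mulrC mulKf ?gt_eqF.
- have := u_al None; rewrite !sumr_option /= sum_div => H.
  rewrite (_ : \sum_i u (Some (Some i)) * be i = u None * de - u (Some None)); last first.
    by move: H; under eq_bigr do rewrite mulrN; rewrite sumrN; lra.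
  by rewrite ler_pdivrMr // mulrC; have := u_ge0 (Some None); lra.
Qed.

End FarkasImplied.

Section LinearIndependence.
Variables (R : realFieldType) (J : finType).

Definition lin_indep (k : nat) (v : 'I_k -> J -> R) :=
  forall lam : 'I_k -> R, (forall j, \sum_i lam i * v i j = 0) -> forall i, lam i = 0.

Lemma nonfree_kernel (m n : nat) (A : 'M[R]_(m, n)) :
  ~~ row_free A -> exists2 r : 'rV_m, r != 0 & r *m A = 0.
Proof.
rewrite -kermx_eq0 => hK.
have [i hi] : exists i, row i (kermx A) != 0.
  apply/existsP; apply: contraT; rewrite negb_exists => /forallP H.
  case/negP: hK; apply/eqP/row_matrixP => i; rewrite row0; exact/eqP/negPn/H.
by exists (row i (kermx A)) => //; apply/eqP; rewrite -sub_kermx row_sub.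
Qed.

Lemma lin_indep_card k (v : 'I_k -> J -> R) : lin_indep v -> (k <= #|J|)%N.
Proof.
move=> Hv; pose M := \matrix_(i < k, j < #|J|) v i (enum_val j).
suff : row_free M by move/eqP => <-; apply: rank_leq_col.
apply: contraT => /nonfree_kernel [r /eqP rn0 hr]; case: rn0.
apply/rowP => i; rewrite mxE; apply: Hv => j.
have := congr1 (fun B : 'rV_#|J| => B 0 (enum_rank j)) hr; rewrite !mxE => e.
by apply: etrans e; apply: eq_bigr => i' _; rewrite mxE enum_rankK.
Qed.

Lemma exists_orth k (v : 'I_k -> J -> R) : (k < #|J|)%N ->
  exists z : J -> R, (exists j, z j != 0) /\ forall i, \sum_j v i j * z j = 0.
Proof.
move=> hk; pose M := \matrix_(i < k, j < #|J|) v i (enum_val j).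
have : ~~ row_free M^T.
  rewrite /row_free mxrank_tr; apply/negP => /eqP h.
  by have := rank_leq_row M; rewrite h => /(leq_trans hk); rewrite ltnn.
move=> /nonfree_kernel [r rn0 hr].
exists (fun j => r 0 (enum_rank j)); split.
  apply/existsP; apply: contraT; rewrite negb_exists => /forallP H.
  case/eqP: rn0; apply/rowP => c; rewrite mxE.
  by have := H (enum_val c); rewrite enum_valK => /negPn/eqP.
move=> i; have := congr1 (fun B : 'rV_k => B 0 i) hr; rewrite !mxE => e.
apply: etrans e; rewrite (reindex (@enum_val J xpredT)) /=; last exact/onW_bij/enum_val_bij.
by apply: eq_bigr => c _; rewrite !mxE enum_valK mulrC.
Qed.

Lemma lin_indep_extend k (v : 'I_k -> J -> R) (u z : J -> R) :
  lin_indep v -> (forall i, \sum_j v i j * z j = 0) -> \sum_j u j * z j != 0 ->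
  lin_indep (fun i : 'I_k.+1 => if unlift ord_max i is Some i' then v i' else u).
Proof.
move=> Hv Hz Hu lam Hl.
pose w (i : 'I_k.+1) := if unlift ord_max i is Some i' then v i' else u.
have {}Hl j : \sum_i lam i * w i j = 0 := Hl j.
have Hsum : \sum_i lam i * \sum_j w i j * z j = 0.
  under eq_bigr do rewrite mulr_sumr.
  rewrite exchange_big /= big1 // => j _.
  by under eq_bigr do rewrite mulrA; rewrite -mulr_suml Hl mul0r.
have lmax : lam ord_max = 0.
  move: Hsum; rewrite (bigD1_ord ord_max) //= [X in _ + X]big1 => [|i _]; last first.
    by rewrite /w liftK Hz mulr0.
  by rewrite addr0 /w unlift_none => /eqP; rewrite mulf_eq0 (negbTE Hu) orbF => /eqP.
have llift i : lam (lift ord_max i) = 0.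
  apply: (Hv (fun i => lam (lift ord_max i))) => {i} j.
  rewrite -[RHS](Hl j) (bigD1_ord ord_max) //= lmax mul0r add0r.
  by apply: eq_bigr => i _; rewrite /w liftK.
by move=> i; case: (unliftP ord_max i) => [i' ->|->].
Qed.

End LinearIndependence.

Section AffineDimension.
Variables (R : realType) (J : finType).
Local Notation vec := {ffun J -> R^o}.

Definition homog (t : vec) (o : option J) : R := if o is Some j then t j else 1.

Lemma card_homog : #|{: option J}| = #|J|.+1.
Proof. exact: card_option. Qed.

Lemma homog_dot (t : vec) (z : option J -> R) :
  \sum_o homog t o * z o = z None + \sum_j t j * z (Some j).
Proof. by rewrite sumr_option /= mul1r. Qed.

Lemma aff_indepE k (p : 'I_k -> vec) : aff_indep p <-> lin_indep (fun i => homog (p i)).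
Proof.
have coord lam j : (\sum_i lam i *: p i) j = \sum_i lam i * p i j.
  by rewrite sum_ffunE; apply: eq_bigr => i _; rewrite ffunE.
split=> [H lam Hl|H lam Hs Hz].
  apply: H; first by rewrite -[RHS](Hl None); apply: eq_bigr => i _; rewrite mulr1.
  by apply/ffunP => j; rewrite coord ffunE -[RHS](Hl (Some j)).
apply: H => -[j|] /=; last by rewrite -[RHS]Hs; apply: eq_bigr => i _; rewrite mulr1.
by have := congr1 (fun f : vec => f j) Hz; rewrite coord ffunE.
Qed.

Lemma aff_indep_card (p : 'I_#|J|.+2 -> vec) : ~ aff_indep p.
Proof. by move/aff_indepE/lin_indep_card; rewrite card_homog ltnn. Qed.

Lemma aff_indep_orth (p : 'I_#|J|.+1 -> vec) (d : vec) kap :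
  aff_indep p -> (forall i, \sum_j p i j * d j = kap) -> d = 0.
Proof.
move=> /aff_indepE Hp Hd; apply/eqP; apply: contraT => dn0.
pose z o := if o is Some j then d j else - kap.
have zz : \sum_o z o * z o != 0.
  have [j dj] : exists j, d j != 0.
    apply/existsP; apply: contraT; rewrite negb_exists => /forallP dj.
    by case/eqP: dn0; apply/ffunP => j; rewrite ffunE; apply/eqP/negPn/dj.
  rewrite sumr_option (bigD1 j) //= gt_eqF //.
  have : 0 < d j * d j by rewrite lt0r mulf_neq0 //= -expr2 sqr_ge0.
  have : 0 <= \sum_(i | i != j) d i * d i by apply: sumr_ge0 => i _; rewrite -expr2 sqr_ge0.
  by have := sqr_ge0 (- kap); rewrite expr2; lra.
have Hz i : \sum_o homog (p i) o * z o = 0 by rewrite homog_dot /= Hd addNr.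
have := lin_indep_card (lin_indep_extend Hp Hz zz).
by rewrite card_homog ltnn.
Qed.

Lemma flat_hyperplane (S : set vec) t0 : S t0 ->
  ~ (exists p : 'I_#|J|.+1 -> vec, (forall i, S (p i)) /\ aff_indep p) ->
  exists (d : vec) (kap : R), d != 0 /\ forall t, S t -> \sum_j t j * d j = kap.
Proof.
move=> St0 nA.
suff : forall k, (k <= #|J|.+1)%N ->
    (exists p : 'I_k -> vec, (forall i, S (p i)) /\ lin_indep (fun i => homog (p i))) \/
    (exists (d : vec) (kap : R), d != 0 /\ forall t, S t -> \sum_j t j * d j = kap).
  case/(_ _ (leqnn _)) => [[p [Sp /aff_indepE Hp]]|//].
  by case: nA; exists p.
elim=> [|k IH] hk; first by left; exists (fun _ => 0); split=> [[]|lam _ []].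
have [[p [Sp Hp]]|] := IH (ltnW hk); last by right.
have [z [[o0 zo0] Hz]] : exists z : option J -> R, (exists o, z o != 0) /\
    forall i, \sum_o homog (p i) o * z o = 0.
  by apply: exists_orth; rewrite card_homog.
have [[t [St ht]]|hno] := pselect (exists t, S t /\ \sum_o homog t o * z o != 0).
  left; exists (fun i => if unlift ord_max i is Some i' then p i' else t).
  split=> [i|]; first by case: unlift.
  move=> lam Hl; apply: (lin_indep_extend Hp Hz ht) => o.
  by rewrite -[RHS](Hl o); apply: eq_bigr => i _; case: unlift.
have Sz t : S t -> \sum_o homog t o * z o = 0.
  by move=> St; apply/eqP; apply: contraT => h; case: hno; exists t.
right; exists [ffun j => (z (Some j) : R^o)], (- z None); split=> [|t /Sz]; last first.
  by rewrite homog_dot => h; under eq_bigr do rewrite ffunE; lra.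
apply/eqP => d0.
have zS j : z (Some j) = 0 by have := congr1 (fun f : vec => f j) d0; rewrite !ffunE.
have := Sz _ St0; rewrite homog_dot big1 ?addr0 => [zN|j _]; last by rewrite zS mulr0.
by move: zo0; case: o0 => [j|]; rewrite ?zS ?zN eqxx.
Qed.

Lemma aff_dim_orth (S : set vec) (d : vec) : aff_dim_eq S #|J| ->
  (forall t1 t2, S t1 -> S t2 -> \sum_j t1 j * d j = \sum_j t2 j * d j) -> d = 0.
Proof.
move=> [[p [Sp Hp]] _] Hd.
by apply: (aff_indep_orth (kap := \sum_j p ord0 j * d j) Hp) => i; apply: Hd.
Qed.

Lemma not_aff_dim_hyperplane (S : set vec) t0 : S t0 -> ~ aff_dim_eq S #|J| ->
  exists (d : vec) (kap : R), d != 0 /\ forall t, S t -> \sum_j t j * d j = kap.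
Proof.
move=> St0 nE; apply: (flat_hyperplane St0) => HA; apply: nE; split=> // -[p [_]].
exact: aff_indep_card.
Qed.

End AffineDimension.

Section Faces.
Variables (R : realType) (V : lmodType R).

Lemma scale_comb_same (l : R) (a : V) : l *: a + (1 - l) *: a = a.
Proof. by rewrite -scalerDl addrC subrK scale1r. Qed.

Lemma add_scale_id_eq0 (u d : V) (e : R) : e != 0 -> u + e *: d = u -> d = 0.
Proof.
move=> e0 /(congr1 (fun v => v - u)); rewrite addrC addKr subrr => /eqP.
by rewrite scaler_eq0 (negbTE e0) => /eqP.
Qed.

Lemma in_aff_dir_set1 (p v : V) : in_aff_dir [set p] v -> v = 0.
Proof.
move=> [k [q1 [q2 [mu [Hq ->]]]]].
by rewrite big1 // => i _; case: (Hq i) => -> ->; rewrite subrr scaler0.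
Qed.

Lemma extreme_point_face (C : set V) p : extreme_point C p -> is_face C [set p].
Proof.
move=> [Cp Hext]; split=> [_ -> //|x y -> -> l _|x y Cx Cy l hl E].
  exact: scale_comb_same.
by have [-> ->] := Hext x y Cx Cy l hl (esym E).
Qed.

Lemma pair_combE (l : R) (a b : V) (x y : R^o) :
  l *: (a, x) + (1 - l) *: (b, y) = (l *: a + (1 - l) *: b, l * x + (1 - l) * y : R^o).
Proof. by []. Qed.

Lemma face_vertical_eq (F : set (V * R^o)) (p : V) (z1 z2 : R) :
  ~ in_aff_dir F (0, 1) -> F (p, z1) -> F (p, z2) -> z1 = z2.
Proof.
move=> nvert F1 F2; apply/eqP; apply: contraT => z12; case: nvert.
exists 1%N, (fun _ => (p, z1 : R^o)), (fun _ => (p, z2 : R^o)), (fun _ => (z1 - z2)^-1).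
split=> //; rewrite big_ord1.
have -> : (z1 - z2)^-1 *: ((p, z1 : R^o) - (p, z2)) =
          ((z1 - z2)^-1 *: (p - p), (z1 - z2)^-1 * (z1 - z2) : R^o) by [].
by rewrite subrr scaler0 mulVf // subr_eq0.
Qed.

(* [F] contains some [(p, z)], hence, being a face, the lower end [(p, z0)] of a
   vertical segment of [C] around it; and a face without vertical direction meets
   each vertical line at most once. *)
Lemma vertical_face_extreme (C F : set (V * R^o)) (p : V) (z0 : R) :
  (forall z : R, C (p, z) <-> z0 <= z) ->
  is_face C F -> ~ in_aff_dir F (0, 1) -> [set v | exists z, F (v, z)] = [set p] ->
  extreme_point C (p, z0).
Proof.
move=> Cvert [FC _ Fface] nvert Fproj.
have Fp v z : F (v, z) -> v = p by move=> Fvz; have : [set p] v by rewrite -Fproj; exists z.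
have [z Fz] : exists z, F (p, z) by have : [set v | exists z, F (v, z)] p by rewrite Fproj.
have Cz0 : C (p, z0 : R^o) by apply/Cvert.
have Fz0 : F (p, z0 : R^o).
  have Cz' : C (p, 2 * z - z0 : R^o) by apply/Cvert; have := proj1 (Cvert z) (FC _ Fz); lra.
  have mid : (1 / 2 : R) *: (p, z0 : R^o) + (1 - 1 / 2) *: (p, 2 * z - z0 : R^o) = (p, z).
    by rewrite pair_combE scale_comb_same; congr (_, _); rewrite /GRing.scale /=; field.
  by have [] := Fface _ _ Cz0 Cz' (1 / 2) ltac:(lra) ltac:(by rewrite mid).
split=> // -[v1 z1] [v2 z2] C1 C2 l hl E.
have [F1 F2] := Fface _ _ C1 C2 l hl ltac:(by rewrite -E).
have e1 := Fp _ _ F1; have e2 := Fp _ _ F2; subst v1 v2.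
by rewrite (face_vertical_eq nvert F1 Fz0) (face_vertical_eq nvert F2 Fz0).
Qed.

End Faces.

Lemma card_tarc (R : realType) (G : network R) : #|{: tarc G}| = ntolls G.
Proof. by rewrite card_sig; apply: eq_card => a; rewrite inE. Qed.

Section DotT.
Variables (R : realType) (G : network R) (t : tvec G).

Lemma dotTC (u : tvec G) : dotT t u = dotT u t.
Proof. by apply: eq_bigr => i _; rewrite mulrC. Qed.

Lemma dotTD (u v : tvec G) : dotT t (u + v) = dotT t u + dotT t v.
Proof. by rewrite /dotT -big_split; apply: eq_bigr => i _; rewrite ffunE mulrDr. Qed.

Lemma dotTZ a (u : tvec G) : dotT t (a *: u) = a * dotT t u.
Proof. by rewrite /dotT mulr_sumr; apply: eq_bigr => i _; rewrite ffunE mulrCA. Qed.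

Lemma dotTN (u : tvec G) : dotT t (- u) = - dotT t u.
Proof. by rewrite -scaleN1r dotTZ mulN1r. Qed.

End DotT.

Section NetworkDuality.
Variables (R : realType) (G : network R).
Hypothesis HG : standing_assumptions G.

Local Notation DV := (tarc G + node G)%type.
Local Notation DI := (Defs.arc G + tarc G)%type.

(* The constraints of the dual problem, as a system [dual_lhs r . q <= dual_rhs r]
   in the variables [q = (t, y)]: one row per arc and one row [- t i <= 0] per
   tolled arc. *)
Definition dual_lhs (r : DI) (v : DV) : R :=
  match r, v with
  | inl a, inl i => - (val i == a)%:R
  | inl a, inr n => (Defs.tail G a == n)%:R - (Defs.head G a == n)%:R
  | inr i, inl j => - (j == i)%:R
  | inr i, inr n => 0
  end.
Definition dual_rhs (r : DI) : R := if r is inl a then cost G a else 0.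

Definition dual_point (t : tvec G) (y : node G -> R) : DV -> R :=
  fun v => match v with inl i => t i | inr n => y n end.
Definition dual_tolls (q : DV -> R) : tvec G := [ffun i => q (inl i)].
Definition dual_pot (q : DV -> R) : node G -> R := fun n => q (inr n).

Definition dual_objf (B : node G -> R) (W : tarc G -> R) : DV -> R :=
  fun v => match v with inl i => - W i | inr n => B n end.

Lemma dual_pointK q : dual_point (dual_tolls q) (dual_pot q) = q.
Proof. by apply: funext => -[i|n] //=; rewrite ffunE. Qed.

Lemma extendE (t : tvec G) a : extend t a = \sum_i (val i == a)%:R * t i.
Proof.
rewrite /extend; case: insubP => [a1 _ <-|Hn].
  rewrite -(sumr_delta a1 t); apply: eq_bigr => i _; by rewrite (inj_eq val_inj).
rewrite big1 // => i _; case: eqP => [e|]; last by rewrite mul0r.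
by move: Hn; rewrite -e (valP i).
Qed.

Lemma dotf_dual_arc t y a :
  dotf (dual_lhs (inl a)) (dual_point t y) = incidT y a - extend t a.
Proof.
rewrite /dotf big_sumType /= extendE addrC; congr (_ + _).
  under eq_bigr do rewrite mulrBl [(Defs.tail G a == _)]eq_sym [(Defs.head G a == _)]eq_sym.
  by rewrite sumrB !sumr_delta.
by rewrite -sumrN; apply: eq_bigr => i _; rewrite mulNr.
Qed.

Lemma dotf_dual_toll t y i : dotf (dual_lhs (inr i)) (dual_point t y) = - t i.
Proof.
rewrite /dotf big_sumType /= [X in _ + X]big1 ?addr0 => [|n _]; last by rewrite mul0r.
by rewrite -(sumr_delta i (fun j => - t j)); apply: eq_bigr => j _; rewrite mulNr mulrN.
Qed.

Lemma dual_systemE t y :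
  (forall r, dotf (dual_lhs r) (dual_point t y) <= dual_rhs r) <-> dual_feasible t y.
Proof.
split=> [H|[H1 /forallP H2] [a|i] /=]; last 2 first.
- by rewrite dotf_dual_arc.
- by rewrite dotf_dual_toll oppr_le0.
split=> [a|]; first by have := H (inl a); rewrite dotf_dual_arc.
by apply/forallP => i; have := H (inr i); rewrite dotf_dual_toll /= oppr_le0.
Qed.

Lemma dotf_dual_objf B W t y :
  dotf (dual_objf B W) (dual_point t y) = dotV B y - \sum_i W i * t i.
Proof.
rewrite /dotf big_sumType /= addrC; congr (_ + _).
by rewrite -sumrN; apply: eq_bigr => i _; rewrite mulNr.
Qed.

Lemma incidE (x : Defs.arc G -> R) n :
  incid x n = \sum_a x a * ((Defs.tail G a == n)%:R - (Defs.head G a == n)%:R).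
Proof.
rewrite /incid; under [RHS]eq_bigr do rewrite mulrBr.
rewrite sumrB; congr (_ - _); rewrite big_mkcond; apply: eq_bigr => a _;
  by case: eqP; rewrite ?mulr1 ?mulr0.
Qed.

Lemma incidD (x x' : Defs.arc G -> R) A B n :
  incid (fun a => A * x a + B * x' a) n = A * incid x n + B * incid x' n.
Proof.
rewrite !incidE !mulr_sumr -big_split; apply: eq_bigr => a _ /=.
by rewrite mulrDl !mulrA.
Qed.

Lemma sum_incid (x : Defs.arc G -> R) (y : node G -> R) :
  \sum_n incid x n * y n = \sum_a x a * incidT y a.
Proof.
under eq_bigr do rewrite incidE mulr_suml.
rewrite exchange_big /=; apply: eq_bigr => a _.
rewrite /incidT -[y (Defs.tail G a)](sumr_delta (Defs.tail G a)).
rewrite -[y (Defs.head G a)](sumr_delta (Defs.head G a)).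
rewrite -sumrB mulr_sumr; apply: eq_bigr => n _.
by rewrite [(n == _)]eq_sym [(n == Defs.head G a)]eq_sym; ring.
Qed.

Lemma sum_extend (x : Defs.arc G -> R) (t : tvec G) :
  \sum_a x a * extend t a = \sum_i t i * x (val i).
Proof.
under eq_bigr do rewrite extendE mulr_sumr.
rewrite exchange_big /=; apply: eq_bigr => i _.
rewrite -(sumr_delta (val i) (fun a => t i * x a)); apply: eq_bigr => a _.
by rewrite [(a == _)]eq_sym; ring.
Qed.

Lemma cost_ge0 a : 0 <= cost G a.
Proof. by case: HG. Qed.

Lemma weak_duality (x : Defs.arc G -> R) (B : node G -> R) (W : tarc G -> R) t y :
  (forall n, incid x n = B n) -> (forall a, 0 <= x a) ->
  (forall i, x (val i) <= W i) -> dual_feasible t y ->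
  dotV B y <= dotA (cost G) x + \sum_i t i * W i.
Proof.
move=> HB Hx HW [Hf /forallP Ht].
rewrite /dotV; under eq_bigr do rewrite -HB; rewrite sum_incid.
apply: (@le_trans _ _ (\sum_a x a * (cost G a + extend t a))).
  by apply: ler_sum => a _; apply: ler_wpM2l => //; have := Hf a; lra.
under eq_bigr do rewrite mulrDr; rewrite big_split /= sum_extend.
apply: lerD; first by apply: ler_sum => a _; rewrite mulrC.
by apply: ler_sum => i _; apply: ler_wpM2l.
Qed.

Lemma lower_weak_duality w x t y : lower_feasible w x -> dual_feasible t y ->
  dotV (@bvec R G) y <= dotA (cost G) x + dotT t w.
Proof. by move=> [H1 H2 H3 H4]; exact: weak_duality. Qed.

Lemma dual_multiplier_flow (u : DI -> R) B W : (forall r, 0 <= u r) ->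
  (forall v, \sum_r u r * dual_lhs r v = dual_objf B W v) ->
  [/\ forall n, incid (fun a => u (inl a)) n = B n,
      forall a, 0 <= u (inl a),
      forall i, u (inl (val i)) <= W i &
      \sum_r u r * dual_rhs r = dotA (cost G) (fun a => u (inl a))].
Proof.
move=> Hu H; split=> [n|a|i|].
- have := H (inr n); rewrite big_sumType /= [X in _ + X]big1 ?addr0 => [<-|i _].
    by rewrite incidE.
  by rewrite mulr0.
- exact: Hu.
- have := H (inl i); rewrite big_sumType /=.
  have sum_neg (T : finType) (k : T) (F : T -> R) : \sum_j F j * - (k == j)%:R = - F k.
    by rewrite -(sumr_delta k (fun j => - F j)); apply: eq_bigr => j _; rewrite eq_sym; ring.
  by rewrite !sum_neg; have := Hu (inr i); lra.
- rewrite big_sumType /= [X in _ + X]big1 ?addr0 => [|i _]; last by rewrite mulr0.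
  by apply: eq_bigr => a _; exact: mulrC.
Qed.

Lemma tollfree_path_flow (u : node G) : connect (@tollfree_arc R G) u (dest G) ->
  exists x : Defs.arc G -> R,
    [/\ forall n, incid x n = (n == u)%:R - (n == dest G)%:R,
        forall a, 0 <= x a & forall a, a \in tolled G -> x a = 0].
Proof.
move/connectP => [p Hp Hl]; elim: p u Hp Hl => [|v p IH] u /= Hp Hl.
  exists (fun _ => 0); split => // n; rewrite incidE big1 ?Hl ?subrr //.
  by move=> a _; rewrite mul0r.
case/andP: Hp => /existsP [a /and3P [Ha /eqP Hta /eqP Hha]] Hp.
have [x [Hx1 Hx2 Hx3]] := IH v Hp Hl.
exists (fun a' => x a' + (a' == a)%:R); split=> [n|a'|a' Ha'].
- rewrite incidE; under eq_bigr do rewrite mulrDl.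
  rewrite big_split /= -incidE Hx1 sumr_delta Hta Hha.
  rewrite [u == n]eq_sym [v == n]eq_sym; lra.
- by apply: addr_ge0 => //; exact: ler0n.
- by rewrite Hx3 // add0r; case: eqP => // e; move: Ha; rewrite -e Ha'.
Qed.

Lemma tollfree_unit_flow : exists x0 : Defs.arc G -> R,
  [/\ forall n, incid x0 n = bvec n, forall a, 0 <= x0 a &
      forall a, a \in tolled G -> x0 a = 0].
Proof.
case: HG => _ _ _ hod hconn.
have [x [H1 H2 H3]] := tollfree_path_flow hconn; exists x; split => // n.
rewrite H1 /bvec; case: (eqVneq n (orig G)) => [->|hn].
  by rewrite (negbTE hod) /= ?mulr0n ?mulr1n; lra.
by case: (eqVneq n (dest G)) => _; rewrite /= ?mulr0n ?mulr1n; lra.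
Qed.

Lemma dual_feasible0 : dual_feasible (0 : tvec G) (fun _ => 0).
Proof.
split=> [a|]; last by apply/forallP => i; rewrite ffunE.
rewrite /incidT subrr extendE big1 ?subr0 => [|i _]; first exact: cost_ge0.
by rewrite ffunE mulr0.
Qed.

Lemma primal_of_dual_bound (W : tarc G -> R) M :
  (forall t y, dual_feasible t y -> dotV (@bvec R G) y - \sum_i W i * t i <= M) ->
  exists x, [/\ forall n, incid x n = bvec n, forall a, 0 <= x a,
     forall i, x (val i) <= W i & dotA (cost G) x <= M].
Proof.
move=> H.
have feas : feasible dual_lhs dual_rhs.
  by exists (dual_point 0 (fun _ => 0)); apply/dual_systemE; exact: dual_feasible0.
have implied q : (forall r, dotf (dual_lhs r) q <= dual_rhs r) ->
    dotf (dual_objf (@bvec R G) W) q <= M.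
  by rewrite -(dual_pointK q) dual_systemE dotf_dual_objf; apply: H.
have [u [u_ge0 u_lhs u_rhs]] := farkas_implied feas implied.
have [Hx1 Hx2 Hx3 Hx4] := dual_multiplier_flow u_ge0 u_lhs.
by exists (fun a => u (inl a)); split => //; rewrite -Hx4.
Qed.

(* The dual constraints together with the objective cut [dual_obj w >= m]. *)
Definition level_lhs (w : tvec G) (r : option DI) (v : DV) : R :=
  if r is Some r then dual_lhs r v else - dual_objf (@bvec R G) w v.
Definition level_rhs (m : R) (r : option DI) : R :=
  if r is Some r then dual_rhs r else - m.

Lemma level_systemE w m t y :
  (forall r, dotf (level_lhs w r) (dual_point t y) <= level_rhs m r) <->
  dual_feasible t y /\ m <= dual_obj w t y.
Proof.
have eN : dotf (level_lhs w None) (dual_point t y) = - dual_obj w t y.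
  by rewrite /= dotfNl dotf_dual_objf.
rewrite -dual_systemE.
split=> [H|[H1 H2] [r|]]; [split=> [r|] | exact: H1 | by rewrite eN /=; lra].
  exact: H (Some r).
by have := H None; rewrite eN /=; lra.
Qed.

Lemma level_multiplier_flow w m (u : option DI -> R) (W : tarc G -> R) :
  (forall r, 0 <= u r) ->
  (forall v, \sum_r u r * level_lhs w r v = dual_objf (fun _ => 0) W v) ->
  [/\ forall n, incid (fun a => u (Some (inl a))) n = u None * bvec n,
      forall a, 0 <= u (Some (inl a)),
      forall i, u (Some (inl (val i))) <= u None * w i + W i &
      \sum_r u r * level_rhs m r = dotA (cost G) (fun a => u (Some (inl a))) - u None * m].
Proof.
move=> u_ge0 u_lhs.
have [||H1 H2 H3 H4] := @dual_multiplier_flow (fun r => u (Some r))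
    (fun n => u None * bvec n) (fun i => u None * w i + W i).
- by move=> r; apply: u_ge0.
- move=> v; have := u_lhs v; rewrite sumr_option /=.
  by case: v => [i|n] /= h; lra.
by split=> //; rewrite sumr_option /= H4; lra.
Qed.

Lemma dual_level_unattained (w : tvec G) m :
  ~ (exists t y, dual_feasible t y /\ m <= dual_obj w t y) ->
  exists2 m', m' < m & forall t y, dual_feasible t y -> dual_obj w t y <= m'.
Proof.
move=> Hno.
have [u [u_ge0 u_lhs u_rhs]] : exists u, infeas_cert (level_lhs w) (level_rhs m) u.
  apply: farkas => -[q]; rewrite -(dual_pointK q) => /level_systemE Hq; apply: Hno.
  by exists (dual_tolls q), (dual_pot q).
have u_lhs0 v : \sum_r u r * level_lhs w r v = dual_objf (fun _ => 0) (fun _ => 0) v.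
  by rewrite u_lhs; case: v => /=; rewrite ?oppr0.
have [x_flow x_ge0 x_cap x_cost] := level_multiplier_flow m u_ge0 u_lhs0.
set mu := u None in x_flow x_cap x_cost.
set x := fun a => u (Some (inl a)) in x_flow x_cap x_cost.
have x_bound t y : dual_feasible t y -> mu * dual_obj w t y <= dotA (cost G) x.
  move=> Hf; have := weak_duality x_flow x_ge0 x_cap Hf.
  rewrite /dotV /dual_obj /dotT mulrBr !mulr_sumr.
  rewrite (eq_bigr (fun i => mu * (w i * t i))) => [|i _]; last by ring.
  by rewrite (eq_bigr (fun n => mu * (bvec n * y n))) => [|n _]; rewrite ?mulrA //; lra.
have [mu_gt0|mu_le0] := boolP (0 < mu).
  exists (dotA (cost G) x / mu) => [|t y /x_bound]; last by rewrite ler_pdivlMr // mulrC.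
  by rewrite ltr_pdivrMr // mulrC; lra.
have mu0 : mu = 0 by have : 0 <= mu := u_ge0 None; lra.
by have := x_bound _ _ dual_feasible0; move: x_cost; rewrite mu0 !mul0r; lra.
Qed.

Lemma dual_attains (w : tvec G) : tnonneg w ->
  exists t y, dual_feasible t y /\
    forall t' y', dual_feasible t' y' -> dual_obj w t' y' <= dual_obj w t y.
Proof.
move=> /forallP w_ge0.
have [x0 [x0_flow x0_ge0 x0_toll]] := tollfree_unit_flow.
have x0_cap i : x0 (val i) <= w i by rewrite x0_toll ?(valP i).
pose S := [set r | exists t y, dual_feasible t y /\ r = dual_obj w t y].
have S_ub : ubound S (dotA (cost G) x0).
  move=> _ [t [y [Hf ->]]]; have := weak_duality x0_flow x0_ge0 x0_cap Hf.
  by rewrite /dual_obj -/(dotT t w) dotTC; lra.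
have S0 : S (dual_obj w 0 (fun _ => 0)).
  by exists 0, (fun _ => 0); split=> //; exact: dual_feasible0.
have [[t [y [Hf Hm]]]|/dual_level_unattained [m' m'_lt m'_ub]] :=
  pselect (exists t y, dual_feasible t y /\ sup S <= dual_obj w t y).
  exists t, y; split => // t' y' Hf'.
  by apply: le_trans Hm; apply: ub_le_sup; [exists (dotA (cost G) x0) | exists t', y'].
have : sup S <= m'.
  by apply: ge_sup => [|_ [t [y [Hf ->]]]]; [exists (dual_obj w 0 (fun _ => 0)) | exact: m'_ub].
by rewrite leNgt m'_lt.
Qed.

End NetworkDuality.

Section ValueFunction.
Variables (R : realType) (G : network R).

Lemma fval_ge_dual (t : tvec G) y : dual_feasible t y ->
  ((dotV (@bvec R G) y)%:E <= fval t)%E.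
Proof.
move=> Hf; rewrite /fval Hf.2.
apply: le_ereal_inf_tmp => _ [x [x_flow x_ge0] <-]; rewrite lee_fin.
have := weak_duality (W := fun i => x (val i)) x_flow x_ge0 (fun i => lexx _) Hf.
suff -> : \sum_i t i * x (val i) = dotT t (restrA1 x) by [].
by apply: eq_bigr => i _; rewrite ffunE.
Qed.

Lemma gval_ge_dual (w t : tvec G) y : dual_feasible t y ->
  ((dual_obj w t y)%:E <= gval w)%E.
Proof.
move=> Hf; apply: (@le_trans _ _ (fval t - (dotT t w)%:E)%E).
  by rewrite /dual_obj EFinB dotTC; apply: leeB => //; exact: fval_ge_dual.
by apply: ereal_sup_ubound; exists t.
Qed.

Lemma gval_le_lower (w : tvec G) x : lower_feasible w x ->
  (gval w <= (dotA (cost G) x)%:E)%E.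
Proof.
move=> [x_cap x_flow _ x_ge0]; apply: ge_ereal_sup => _ [t _ <-].
case t_ge0: (tnonneg t); last by rewrite /fval t_ge0 addNye leNye.
have fval_le : (fval t <= (dotA (cost G) x + dotT t (restrA1 x))%:E)%E.
  by rewrite /fval t_ge0; apply: ereal_inf_lbound; exists x.
apply: le_trans (leeB fval_le (lexx (dotT t w)%:E)) _; rewrite -EFinB lee_fin.
suff : dotT t (restrA1 x) <= dotT t w by lra.
apply: ler_sum => i _; rewrite ffunE; apply: ler_wpM2l => //.
exact: (forallP t_ge0).
Qed.

Lemma epi_g_dual_le (w : tvec G) (z : R) t y : epi_g (w, (z : R^o)) ->
  dual_feasible t y -> dual_obj w t y <= z.
Proof. by move=> Hz Hf; have := le_trans (gval_ge_dual w Hf) Hz; rewrite lee_fin. Qed.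

(* By weak duality [x0] is then an optimal follower response, and the common
   optimal value is [g w] (lemma [gval_opt]). *)
Definition primal_dual_opt (w t0 : tvec G) (y0 : node G -> R) (x0 : Defs.arc G -> R) :=
  [/\ dual_feasible t0 y0,
      forall t y, dual_feasible t y -> dual_obj w t y <= dual_obj w t0 y0,
      lower_feasible w x0 & dotA (cost G) x0 = dual_obj w t0 y0].

Lemma strong_duality (w : tvec G) : standing_assumptions G -> tnonneg w ->
  exists t0 y0 x0, primal_dual_opt w t0 y0 x0.
Proof.
move=> HG w_ge0; have [t0 [y0 [t0_feas t0_opt]]] := dual_attains HG w_ge0.
have [x [x_flow x_ge0 x_cap x_cost]] :=
  primal_of_dual_bound HG (W := w) (M := dual_obj w t0 y0) t0_opt.
have x_feas : lower_feasible w x by split.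
exists t0, y0, x; split=> //; apply/eqP; rewrite eq_le x_cost /=.
by have := lower_weak_duality x_feas t0_feas; rewrite /dual_obj dotTC; lra.
Qed.

End ValueFunction.

Section StrongBilevelFeasibility.
Variables (R : realType) (G : network R) (w t0 : tvec G).
Variables (y0 : node G -> R) (x0 : Defs.arc G -> R).
Hypothesis opt : primal_dual_opt w t0 y0 x0.

Local Notation h := (dual_obj w t0 y0).
Local Notation full_dim := (aff_dim_eq (Tset w) (ntolls G)).

Lemma gval_opt : gval w = h%:E.
Proof.
case: opt => t0_feas _ x0_feas x0_cost.
by apply/eqP; rewrite eq_le -x0_cost gval_le_lower //= x0_cost gval_ge_dual.
Qed.

Lemma epi_g_vertical (z : R) : epi_g (w, z : R^o) <-> h <= z.
Proof. by rewrite /epi_g /= gval_opt lee_fin. Qed.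

Lemma TsetP t : Tset w t <-> exists2 y, dual_feasible t y & dual_obj w t y = h.
Proof.
case: opt => t0_feas t0_opt _ _.
split=> [[y [Hf Hmax]]|[y Hf Hh]]; exists y => //.
  by apply/eqP; rewrite eq_le t0_opt //= Hmax.
by split=> // t' y' Hf'; rewrite Hh t0_opt.
Qed.

Lemma Tset_t0 : Tset w t0.
Proof. by case: opt => t0_feas _ _ _; apply/TsetP; exists y0. Qed.

Lemma Tset_lower_bound t w' x : Tset w t -> lower_feasible w' x ->
  h + dotT t w <= dotA (cost G) x + dotT t w'.
Proof.
move=> /TsetP [y Hf <-] x_feas; have := lower_weak_duality x_feas Hf.
by rewrite /dual_obj (dotTC w t); lra.
Qed.

Lemma Wset_of_Tset t w' x : Tset w t -> lower_feasible w' x ->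
  dotA (cost G) x + dotT t w' <= h + dotT t w -> Wset t w'.
Proof.
move=> Tt x_feas x_le; exists x; split=> // w'' x'' /(Tset_lower_bound Tt).
by rewrite /lower_obj; lra.
Qed.

Lemma epi_g_Tset_bound (w' : tvec G) (z : R) t : epi_g (w', z : R^o) -> Tset w t ->
  h - dotT t (w' - w) <= z.
Proof.
move=> Hz /TsetP [y Hf Hh]; have := epi_g_dual_le Hz Hf.
move: Hh; rewrite dotTD dotTN /dual_obj (dotTC w') (dotTC w); lra.
Qed.

Lemma flat_direction_flow (d : tvec G) kap (sg : R) :
  (forall t, Tset w t -> dotT t d = kap) ->
  exists2 mu, 0 <= mu & exists xt : Defs.arc G -> R,
    [/\ forall n, incid xt n = mu * bvec n, forall a, 0 <= xt a,
        forall i, xt (val i) <= mu * w i + sg * d i &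
        dotA (cost G) xt <= mu * h - sg * kap].
Proof.
case: opt => t0_feas t0_opt _ _ Td.
have feas : feasible (level_lhs w) (level_rhs h).
  by exists (dual_point t0 y0); apply/level_systemE.
have implied q : (forall r, dotf (level_lhs w r) q <= level_rhs h r) ->
    dotf (dual_objf (fun _ => 0) (fun i => sg * d i)) q <= - sg * kap.
  rewrite -(dual_pointK q) level_systemE dotf_dual_objf => -[Hf Hh].
  have /Td : Tset w (dual_tolls q).
    by apply/TsetP; exists (dual_pot q) => //; apply/eqP; rewrite eq_le Hh t0_opt.
  rewrite /dotT /dotV => e; rewrite big1 => [|n _]; last by rewrite mul0r.
  rewrite (eq_bigr (fun i => sg * (dual_tolls q i * d i))) => [|i _]; last by ring.
  by rewrite -mulr_sumr e; lra.
have [u [u_ge0 u_lhs u_rhs]] := farkas_implied feas implied.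
have [x_flow x_ge0 x_cap x_cost] := level_multiplier_flow h u_ge0 u_lhs.
exists (u None) => //; exists (fun a => u (Some (inl a))); split => //.
by move: u_rhs; rewrite x_cost; lra.
Qed.

(* The convex combination of [x0] with weight [1 - mu / M] and of [xt] with
   weight [1 / M] is a flow of value one. *)
Lemma shift_lower_feasible (d : tvec G) kap (sg mu M : R) (xt : Defs.arc G -> R) :
  0 <= mu -> mu + 1 <= M ->
  (forall n, incid xt n = mu * bvec n) -> (forall a, 0 <= xt a) ->
  (forall i, xt (val i) <= mu * w i + sg * d i) ->
  dotA (cost G) xt <= mu * h - sg * kap ->
  exists x, lower_feasible (w + (sg / M) *: d) x /\
            dotA (cost G) x <= h - sg / M * kap.
Proof.
case: opt => _ _ [x0_cap x0_flow _ x0_ge0] x0_cost mu_ge0 hM xt_flow xt_ge0 xt_cap xt_cost.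
have M_gt0 : 0 < M by lra.
have Mi_gt0 : 0 < M^-1 by rewrite invr_gt0.
have c_ge0 : 0 <= M^-1 * (M - mu) by apply: mulr_ge0; lra.
pose x a := M^-1 * xt a + (M^-1 * (M - mu)) * x0 a.
have x_ge0 a : 0 <= x a by apply: addr_ge0; apply: mulr_ge0 => //; exact: ltW.
have shiftE i : (w + (sg / M) *: d) i = M^-1 * (mu * w i + sg * d i) + M^-1 * (M - mu) * w i.
  by rewrite !ffunE /GRing.scale /=; field; rewrite gt_eqF.
have x_cap i : x (val i) <= (w + (sg / M) *: d) i.
  rewrite shiftE; apply: lerD; first by rewrite ler_pM2l.
  by apply: ler_wpM2l.
exists x; split; first split=> // [n|].
- by rewrite incidD xt_flow x0_flow; field; rewrite gt_eqF.
- by apply/forallP => i; apply: le_trans (x_cap i); exact: x_ge0.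
have -> : dotA (cost G) x = M^-1 * dotA (cost G) xt + M^-1 * (M - mu) * dotA (cost G) x0.
  by rewrite /dotA !mulr_sumr -big_split; apply: eq_bigr => a _ /=; rewrite /x; ring.
have -> : h - sg / M * kap = M^-1 * (mu * h - sg * kap) + M^-1 * (M - mu) * h.
  by field; rewrite gt_eqF.
by rewrite x0_cost lerD2r ler_pM2l.
Qed.

Lemma not_full_dim_shift : ~ full_dim ->
  exists (d : tvec G) (kap e : R),
    [/\ d != 0, 0 < e, forall t, Tset w t -> dotT t d = kap,
        exists x, lower_feasible (w + e *: d) x /\ dotA (cost G) x <= h - e * kap &
        exists x, lower_feasible (w - e *: d) x /\ dotA (cost G) x <= h + e * kap].
Proof.
move=> nfull.
have [d [kap [dn0 Td]]] : exists (d : tvec G) (kap : R),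
    d != 0 /\ forall t, Tset w t -> dotT t d = kap.
  apply: (not_aff_dim_hyperplane Tset_t0); by rewrite card_tarc.
have shift sg : exists2 M0, 0 < M0 & forall M, M0 <= M ->
    exists x, lower_feasible (w + (sg / M) *: d) x /\ dotA (cost G) x <= h - sg / M * kap.
  have [mu mu_ge0 [xt [xt_flow xt_ge0 xt_cap xt_cost]]] := flat_direction_flow sg Td.
  exists (mu + 1) => [|M hM]; first lra.
  exact: shift_lower_feasible xt_flow xt_ge0 xt_cap xt_cost.
have [M1 M1_gt0 H1] := shift 1; have [M2 M2_gt0 H2] := shift (-1).
have [xp [xp_feas xp_cost]] := H1 (M1 + M2) ltac:(lra).
have [xm [xm_feas xm_cost]] := H2 (M1 + M2) ltac:(lra).
exists d, kap, (1 / (M1 + M2)); split=> //.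
- by apply: divr_gt0; lra.
- by exists xp.
by exists xm; move: xm_feas xm_cost; rewrite !mulNr scaleNr opprK.
Qed.

Lemma full_dim_orth v : full_dim ->
  (forall t1 t2, Tset w t1 -> Tset w t2 -> dotT t1 v = dotT t2 v) -> v = 0.
Proof. by rewrite -card_tarc; exact: aff_dim_orth. Qed.

Lemma full_dim_WsetT : full_dim -> WsetT (Tset w) = [set w].
Proof.
case: opt => _ _ x0_feas x0_cost full.
apply/seteqP; split=> [w' Hw'|_ -> t Tt]; last first.
  by apply: (Wset_of_Tset Tt x0_feas); rewrite x0_cost.
have Hx t : Tset w t ->
    exists2 x, lower_feasible w' x & dotA (cost G) x + dotT t w' = h + dotT t w.
  move=> Tt; have [x [x_feas x_min]] := Hw' t Tt.
  exists x => //; apply/eqP; rewrite eq_le Tset_lower_bound // andbT.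
  by have := x_min w x0 x0_feas; rewrite /lower_obj x0_cost.
apply/eqP; rewrite -subr_eq0; apply/eqP/full_dim_orth => // t1 t2 T1 T2.
have [x1 x1_feas x1_eq] := Hx t1 T1; have [x2 x2_feas x2_eq] := Hx t2 T2.
have := Tset_lower_bound T2 x1_feas; have := Tset_lower_bound T1 x2_feas.
by rewrite !dotTD !dotTN; lra.
Qed.

Lemma WsetT_full_dim : WsetT (Tset w) = [set w] -> full_dim.
Proof.
move=> Wdef; case: (pselect full_dim) => // nfull; exfalso.
have [d [kap [e [dn0 e_gt0 Td [xp [xp_feas xp_cost]] _]]]] := not_full_dim_shift nfull.
have : WsetT (Tset w) (w + e *: d).
  by move=> t Tt; apply: (Wset_of_Tset Tt xp_feas); rewrite dotTD dotTZ Td //; lra.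
rewrite Wdef => /(add_scale_id_eq0 (lt0r_neq0 e_gt0)) /eqP.
by rewrite (negbTE dn0).
Qed.

(* [(v, z) |-> z - h + t . (v - w)] is affine, nonnegative on [epi g] (lemma
   [epi_g_Tset_bound]) and zero at [(w, h)], so it vanishes at both ends of every
   open segment of [epi g] through [(w, h)]. *)
Lemma epi_g_segment_tight (w1 w2 : tvec G) (z1 z2 l : R) t :
  0 < l < 1 -> epi_g (w1, z1 : R^o) -> epi_g (w2, z2 : R^o) ->
  (w, h : R^o) = l *: (w1, z1 : R^o) + (1 - l) *: (w2, z2 : R^o) -> Tset w t ->
  z1 - h + dotT t (w1 - w) = 0 /\ z2 - h + dotT t (w2 - w) = 0.
Proof.
move=> /andP [l_gt0 l_lt1] C1 C2 E Tt.
have [Ew Ez] : w = l *: w1 + (1 - l) *: w2 /\ h = l * z1 + (1 - l) * z2.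
  by move: E; rewrite pair_combE => -[-> ->].
have b1 := epi_g_Tset_bound C1 Tt; have b2 := epi_g_Tset_bound C2 Tt.
have tw : dotT t w = l * dotT t w1 + (1 - l) * dotT t w2 by rewrite {1}Ew dotTD !dotTZ.
have sum0 : l * (z1 - h + dotT t (w1 - w)) + (1 - l) * (z2 - h + dotT t (w2 - w)) = 0.
  by rewrite !dotTD !dotTN tw Ez; ring.
have p1 : 0 <= l * (z1 - h + dotT t (w1 - w)) by apply: mulr_ge0; lra.
have p2 : 0 <= (1 - l) * (z2 - h + dotT t (w2 - w)) by apply: mulr_ge0; lra.
have /eqP : l * (z1 - h + dotT t (w1 - w)) = 0 by lra.
have /eqP : (1 - l) * (z2 - h + dotT t (w2 - w)) = 0 by lra.
have l0 : l != 0 := lt0r_neq0 l_gt0.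
have l1 : 1 - l != 0 by rewrite subr_eq0 eq_sym lt_eqF.
by rewrite !mulf_eq0 (negbTE l0) (negbTE l1) /= => /eqP a2 /eqP a1.
Qed.

Lemma full_dim_affine_eq (v : tvec G) (z : R) : full_dim ->
  (forall t, Tset w t -> z - h + dotT t (v - w) = 0) -> (v, z : R^o) = (w, h).
Proof.
move=> full Hv.
have /eqP : v - w = 0 by apply: full_dim_orth => // t1 t2 /Hv + /Hv; lra.
rewrite subr_eq0 => /eqP v_eq; have := Hv _ Tset_t0.
by rewrite v_eq subrr -(scale0r 0) dotTZ mul0r addr0 => /eqP; rewrite subr_eq0 => /eqP ->.
Qed.

Lemma full_dim_extreme : full_dim -> extreme_point (@epi_g R G) (w, h : R^o).
Proof.
move=> full; split=> [|[w1 z1] [w2 z2] C1 C2 l hl E]; first exact/epi_g_vertical.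
have tight := epi_g_segment_tight hl C1 C2 E.
by split; apply: full_dim_affine_eq => // t /tight [].
Qed.

Lemma extreme_full_dim : extreme_point (@epi_g R G) (w, h : R^o) -> full_dim.
Proof.
move=> [_ ext]; case: (pselect full_dim) => // nfull; exfalso.
have [d [kap [e [dn0 e_gt0 _ [xp [xp_feas xp_cost]] [xm [xm_feas xm_cost]]]]]] :=
  not_full_dim_shift nfull.
have Cp : epi_g (w + e *: d, h - e * kap : R^o).
  by apply: le_trans (gval_le_lower xp_feas) _; rewrite lee_fin.
have Cm : epi_g (w - e *: d, h + e * kap : R^o).
  by apply: le_trans (gval_le_lower xm_feas) _; rewrite lee_fin.
have mid : (1 / 2 : R) *: (w + e *: d, h - e * kap : R^o) +
           (1 - 1 / 2) *: (w - e *: d, h + e * kap : R^o) = (w, h).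
  rewrite pair_combE; congr (_, _); last by rewrite /GRing.scale /=; field.
  by apply/ffunP => i; rewrite !ffunE /GRing.scale /=; field.
have [/(congr1 fst) /= /(add_scale_id_eq0 (lt0r_neq0 e_gt0)) /eqP] :=
  ext _ _ Cp Cm (1 / 2) ltac:(lra) (esym mid).
by rewrite (negbTE dn0).
Qed.

Lemma reaction_set_extreme : reaction_set [set w] -> extreme_point (@epi_g R G) (w, h : R^o).
Proof.
move=> [F [Fface nvert Fproj]].
exact: vertical_face_extreme epi_g_vertical Fface nvert (esym Fproj).
Qed.

Lemma extreme_reaction_set (z : R) :
  extreme_point (@epi_g R G) (w, z : R^o) -> reaction_set [set w].
Proof.
move=> ext; exists [set (w, z : R^o)]; split.
- exact: extreme_point_face.
- by move/in_aff_dir_set1/(congr1 snd)/eqP; rewrite oner_eq0.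
- by apply/seteqP; split=> [_ ->|v [z' [-> _]]] //; exists z.
Qed.

Lemma gval_extremeE :
  (exists z : R, gval w = z%:E /\ extreme_point (@epi_g R G) (w, z : R^o)) <->
  extreme_point (@epi_g R G) (w, h : R^o).
Proof.
rewrite gval_opt; split=> [[z [[<-] //]]|ext].
by exists h.
Qed.

End StrongBilevelFeasibility.

Unset Implicit Arguments.

Theorem lemma4 (R : realType) (G : network R) (HG : standing_assumptions G)
    (w : tvec G) (w_ge0 : tnonneg w) :
  [<-> strongly_bilevel_feasible w;
       reaction_set [set w];
       WsetT (Tset w) = [set w];
       (exists z : R, gval w = z%:E /\ extreme_point (@epi_g R G) (w, (z : R^o)));
       aff_dim_eq (Tset w) (ntolls G)].
Proof.
have [t0 [y0 [x0 opt]]] := strong_duality HG w_ge0.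
tfae.
- by case.
- by move/(reaction_set_extreme opt)/(extreme_full_dim opt)/(full_dim_WsetT opt).
- by move/(WsetT_full_dim opt)/(full_dim_extreme opt)/(gval_extremeE opt).
- by move/(gval_extremeE opt)/(extreme_full_dim opt).
- by move/(full_dim_extreme opt)/extreme_reaction_set.
Qed.
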